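(* Let $\mathbf V$ be a monoid variety satisfying $xtx\approx xtx^2$. If $\mathbb M_\lambda(ata^+)\not\subseteq\mathbf V$, then $\mathbf V$ satisfies $xtx\approx x^2tx$.
   Context: Words are elements of the free monoid $\mathfrak A^*$ over a countably infinite alphabet. Let $\tau_1$ be the congruence on $\mathfrak A^*$ generated by $a=aa$ for all letters $a$. Define $\mathbf u\,\lambda\,\mathbf v$ iff $\mathbf u\,\tau_1\,\mathbf v$, $\mathbf u,\mathbf v$ have the same set of multiple (occurring at least twice) letters, and for each multiple letter its first two occurrences are adjacent in $\mathbf u$ iff they are adjacent in $\mathbf v$. For $\lambda$-classes, $\mathtt v\le\mathtt u$ iff $\mathtt u=\mathtt p\mathtt v\mathtt s$ in $\mathfrak A^*/\lambda$. For a set $\mathtt W$ of $\lambda$-classes, $M_\lambda(\mathtt W)$ is the Rees quotient of $\mathfrak A^*/\lambda$ by the ideal of classes not $\le$ any element of $\mathtt W$, and $\mathbb M_\lambda(\mathtt W)$ is the monoid variety it generates. Here $ata^+$ denotes the $\lambda$-class $\{ata^k:k\ge1\}$. *)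

From mathcomp Require Import all_boot.
From Stdlib Require Import ClassicalEpsilon.

Set Implicit Arguments.
Unset Strict Implicit.
Unset Printing Implicit Defensive.

Definition word := seq nat.

(* tau_1: the congruence on A^* generated by a = aa for all letters a,
   i.e. the equivalence closure of {(p a s, p a a s)}. *)
Inductive tau1 : word -> word -> Prop :=
  | tau1_step p s (a : nat) : tau1 (p ++ a :: s) (p ++ a :: a :: s)
  | tau1_refl u : tau1 u u
  | tau1_sym u v : tau1 u v -> tau1 v u
  | tau1_trans u v w : tau1 u v -> tau1 v w -> tau1 u w.

Definition multiple (x : nat) (u : word) : Prop := 2 <= count_mem x u.

Definition first_two_adjacent (x : nat) (u : word) : Prop :=
  exists p s, x \notin p /\ u = p ++ x :: x :: s.

Definition lam (u v : word) : Prop :=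
  [/\ tau1 u v,
      (forall x, multiple x u <-> multiple x v) &
      (forall x, multiple x u -> (first_two_adjacent x u <-> first_two_adjacent x v))].

(* A set W of lambda-classes is given by the predicate of all words lying in
   these classes.  A class (represented by v) is <= some element of W iff
   some w in W equals p v s in A^*/lambda, i.e. w lambda (p ++ v ++ s). *)
Definition below (W : word -> Prop) (v : word) : Prop :=
  exists w p s, W w /\ lam w (p ++ v ++ s).

(* The lambda-class ata^+ = {a t a^k : k >= 1}, with letters a = 0, t = 1. *)
Definition ata_plus (w : word) : Prop :=
  exists k, 1 <= k /\ w = [:: 0; 1] ++ nseq k 0.

(* The Rees quotient M_lambda(W): elements are the lambda-classes <= some element
   of W (represented by words v with below W v, compared up to lambda),
   together with the zero, represented by None. *)
Definition Melt_valid (W : word -> Prop) (e : option word) : Prop :=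
  match e with None => True | Some v => below W v end.

Definition Melt_eq (e f : option word) : Prop :=
  match e, f with
  | None, None => True
  | Some u, Some v => lam u v
  | _, _ => False
  end.

Definition Mmul (W : word -> Prop) (e f : option word) : option word :=
  match e, f with
  | Some u, Some v =>
      if excluded_middle_informative (below W (u ++ v)) then Some (u ++ v) else None
  | _, _ => None
  end.

Definition Munit : option word := Some [::].

Definition Meval (W : word -> Prop) (phi : nat -> option word) (u : word) : option word :=
  foldr (fun x acc => Mmul W (phi x) acc) Munit u.

Definition Msat (W : word -> Prop) (u v : word) : Prop :=
  forall phi : nat -> option word, (forall x, Melt_valid W (phi x)) ->
    Melt_eq (Meval W phi u) (Meval W phi v).

Definition subst (sigma : nat -> word) (u : word) : word := flatten (map sigma u).

(* A monoid variety V is represented by its equational theory Id(V): the set of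
   identities u ~ v it satisfies, which is exactly a fully invariant congruence
   on the free monoid the free monoid (Birkhoff). *)
Record fi_congruence (S : word -> word -> Prop) : Prop := {
  fic_refl : forall u, S u u;
  fic_sym : forall u v, S u v -> S v u;
  fic_trans : forall u v w, S u v -> S v w -> S u w;
  fic_mul : forall u v u' v', S u v -> S u' v' -> S (u ++ u') (v ++ v');
  fic_subst : forall u v (sigma : nat -> word), S u v -> S (subst sigma u) (subst sigma v)
}.

(* MM_lambda(W) (the variety generated by M_lambda(W)) is contained in the
   variety with equational theory S iff M_lambda(W) satisfies every identity of S. *)
Definition Mvar_sub (W : word -> Prop) (S : word -> word -> Prop) : Prop :=
  forall u v, S u v -> Msat W u v.

(* Suppose V satisfies xtx = xtx^2 but not xtx = x^2tx.  Then V preserves the number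
   of occurrences of every letter capped at 2 (otherwise V satisfies x = x^2, or 1 = x^n
   and then again x = x^2, and multiplying by tx gives xtx = x^2tx).  Moreover an identity
   x^a t x^b = x^c t x^d of V with a <= 1 forces c = a: otherwise, after multiplying by x
   on the left if necessary, xtx^2 = xtx turns it into xtx = x^2tx or xtx = x^2t, and
   multiplying the latter by x on the right gives xtx = x^2tx as well.  The nonzero
   elements of M_lambda(ata^+) are the lambda-classes of the words x^j and x^c t x^d with
   c <= 1, so by these two invariants an identity of V never takes such a word out of its
   lambda-class, hence every identity of V holds in M_lambda(ata^+). *)

From Stdlib Require Import Classical ClassicalEpsilon.
From mathcomp Require Import all_boot zify.

Set Implicit Arguments.
Unset Strict Implicit.
Unset Printing Implicit Defensive.

Lemma subst_cons sigma x u : subst sigma (x :: u) = sigma x ++ subst sigma u.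
Proof. by []. Qed.

Lemma subst_count_mem z u :
  subst (fun y => if y == z then [:: 0] else [::]) u = nseq (count_mem z u) 0.
Proof. by elim: u => // y u IH; rewrite subst_cons IH /=; case: (y == z). Qed.

Section LambdaQuotient.
Variable W : word -> Prop.

Lemma below_prefix u v : below W (u ++ v) -> below W u.
Proof.
by case=> w [p [s [Ww l]]]; exists w, p, (v ++ s); split; move: l; rewrite // -!catA.
Qed.

Lemma below_suffix u v : below W (u ++ v) -> below W v.
Proof.
by case=> w [p [s [Ww l]]]; exists w, (p ++ u), s; split; move: l; rewrite // -!catA.
Qed.

Lemma Meval_cons phi x u : Meval W phi (x :: u) = Mmul W (phi x) (Meval W phi u).
Proof. by []. Qed.

(* A valuation [phi] in M_lambda(W) acts as the substitution sending each letter to its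
   value, with the zero replaced by a word [z0] that is not below W. *)
Section Evaluation.
Variables (phi : nat -> option word) (z0 : word).
Hypothesis z0_zero : ~ below W z0.
Local Notation sigma := (fun x => odflt z0 (phi x)).

Lemma Meval_below u : below W (subst sigma u) -> Meval W phi u = Some (subst sigma u).
Proof.
elim: u => [//|x u IH]; rewrite subst_cons Meval_cons => bu.
rewrite IH; last exact: below_suffix bu.
move: bu; rewrite /Mmul; case: (phi x) => [v|] /= bu.
- by case: excluded_middle_informative.
- by case: z0_zero; apply: below_prefix bu.
Qed.

Hypothesis below_nil : below W [::].

Lemma Meval_not_below u : ~ below W (subst sigma u) -> Meval W phi u = None.
Proof.
elim: u => [//|x u IH]; rewrite subst_cons Meval_cons => nbu.
have [bu|nbu'] := classic (below W (subst sigma u)); last by rewrite IH //; case: (phi x).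
move: nbu; rewrite Meval_below // /Mmul; case: (phi x) => [v|] //= nbu.
by case: excluded_middle_informative.
Qed.

End Evaluation.

Definition below_lam_stable (S : word -> word -> Prop) : Prop :=
  forall w w', below W w -> S w w' -> below W w' /\ lam w w'.

Lemma Mvar_sub_of_lam_stable S z0 : fi_congruence S -> below W [::] -> ~ below W z0 ->
  below_lam_stable S -> Mvar_sub W S.
Proof.
move=> HS b_nil nb_z0 stable u v Suv phi _.
pose sigma x := odflt z0 (phi x).
have Ssigma := fic_subst HS sigma Suv.
have [bu|nbu] := classic (below W (subst sigma u));
have [bv|nbv] := classic (below W (subst sigma v)).
- by rewrite !(Meval_below nb_z0) //; have [] := stable _ _ bu Ssigma.
- by have [] := stable _ _ bu Ssigma.
- by have [] := stable _ _ bv (fic_sym HS Ssigma).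
- by rewrite !(Meval_not_below nb_z0 b_nil).
Qed.

End LambdaQuotient.

Lemma tau1_mem u v y : tau1 u v -> (y \in u) = (y \in v).
Proof.
elim=> [p s a|//|{}u {}v _ IH|{}u {}v w _ IH1 _ IH2].
- by rewrite !mem_cat !inE; case: (y == a).
- by rewrite IH.
- by rewrite IH1.
Qed.

Lemma tau1_pow P x m n : tau1 (P ++ nseq m.+1 x) (P ++ nseq n.+1 x).
Proof.
suff to1 k : tau1 (P ++ nseq k.+1 x) (P ++ [:: x]).
  exact: tau1_trans (to1 m) (tau1_sym (to1 n)).
elim: k => [|k IH]; first exact: tau1_refl.
exact: tau1_trans (tau1_sym (tau1_step P (nseq k x) x)) IH.
Qed.

Lemma lam_refl u : lam u u.
Proof. by split=> //; apply: tau1_refl. Qed.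

Definition x_t_x (a b : nat) : word := nseq a 0 ++ 1 :: nseq b 0.

Lemma x_t_x_sub01 a b : {subset x_t_x a b <= [:: 0; 1]}.
Proof. by move=> y; rewrite mem_cat !inE !mem_nseq; case: (y == 0); rewrite ?andbF ?orbF ?orbT. Qed.

Lemma count_x_t_x z a b : count_mem z (x_t_x a b) = (z == 0) * (a + b) + (z == 1).
Proof. by rewrite count_cat /= !count_nseq; case: z => [|[|z]] /=; lia. Qed.

Lemma multiple_x_t_x z a b : multiple z (x_t_x a b) <-> z = 0 /\ 2 <= a + b.
Proof. by rewrite /multiple count_x_t_x; case: z => [|[|z]] /=; lia. Qed.

Lemma multiple_pow z j : multiple z (nseq j 0) <-> z = 0 /\ 2 <= j.
Proof. by rewrite /multiple count_nseq; case: z => [|z] /=; lia. Qed.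

Lemma first_two_adjacent_x_t_x a b :
  first_two_adjacent 0 (x_t_x a b) <-> a != 1 /\ 2 <= a + b.
Proof.
split=> [[p [s [p0 e]]]|[a1 ab2]].
- split.
  + apply: contraTneq p0 => a1; move: e; rewrite a1.
    by case: p => [|y p] //= [<-]; rewrite mem_head.
  + by move: (count_x_t_x 0 a b); rewrite e count_cat /=; lia.
- case: a a1 ab2 => [|[//|a]] _ ab2.
  + by exists [:: 1], (nseq b.-2 0); split=> //; case: b ab2 => [|[|b]].
  + by exists [::], (x_t_x a b).
Qed.

Lemma lam_pow j k : minn j 2 = minn k 2 -> lam (nseq j 0) (nseq k 0).
Proof.
have [-> _|jk e] := eqVneq j k; first exact: lam_refl.
have [j' ->] : exists j', j = j'.+2 by exists j.-2; lia.
have [k' ->] : exists k', k = k'.+2 by exists k.-2; lia.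
split; first exact: (tau1_pow [::] 0 j'.+1 k'.+1).
- by move=> z; rewrite !multiple_pow.
- move=> z /multiple_pow [-> _].
  by split=> _; [exists [::], (nseq k' 0) | exists [::], (nseq j' 0)].
Qed.

Lemma lam_x_t_x a b d : a <= 1 -> minn (a + b) 2 = minn (a + d) 2 ->
  lam (x_t_x a b) (x_t_x a d).
Proof.
move=> a1 e; split.
- case: b d e => [|b] [|d] e; try lia; first exact: tau1_refl.
  by rewrite /x_t_x -!(cat_rcons 1); apply: tau1_pow.
- by move=> z; rewrite !multiple_x_t_x; lia.
- by move=> z /multiple_x_t_x [-> _]; rewrite !first_two_adjacent_x_t_x; lia.
Qed.

Lemma nseq_of_sub01 s : {subset s <= [:: 0; 1]} -> 1 \notin s -> s = nseq (size s) 0.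
Proof.
move=> s01 s1; apply/all_pred1P/allP => y ys.
by move: (s01 y ys); rewrite !inE => /orP [//|/eqP y1]; rewrite -y1 ys in s1.
Qed.

Lemma x_t_x_of_sub01 s : {subset s <= [:: 0; 1]} -> count_mem 1 s = 1 ->
  exists a b, s = x_t_x a b.
Proof.
elim: s => [//|y s IH] s01.
have s01' : {subset s <= [:: 0; 1]} by move=> z zs; apply: s01; rewrite inE zs orbT.
move: (s01 y (mem_head y s)); rewrite !inE => /orP [] /eqP -> /= c1.
- by have [a [b ->]] := IH s01' c1; exists a.+1, b.
- exists 0, (size s); rewrite /x_t_x /= -nseq_of_sub01 //.
  by apply/count_memPn; move: c1; rewrite add1n => -[].
Qed.

Definition ata_factor (w : word) : Prop :=
  (exists j, w = nseq j 0) \/ (exists a b, a <= 1 /\ w = x_t_x a b).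

Lemma lam_ata_plus k z : 0 < k -> lam (x_t_x 1 k) z -> exists b, z = x_t_x 1 b.
Proof.
move=> k0 [tz mz az].
have z01 : {subset z <= [:: 0; 1]} by move=> y; rewrite -(tau1_mem y tz); apply: x_t_x_sub01.
have z1 : count_mem 1 z = 1.
  have : 1 \in z by rewrite -(tau1_mem 1 tz) mem_cat mem_head orbT.
  rewrite -has_pred1 has_count.
  have : ~ multiple 1 z by rewrite -mz multiple_x_t_x => -[].
  rewrite /multiple; lia.
have [a [b ez]] := x_t_x_of_sub01 z01 z1; exists b; rewrite ez.
have x_mult : multiple 0 (x_t_x 1 k) by rewrite multiple_x_t_x; lia.
have := az 0 x_mult; rewrite ez !first_two_adjacent_x_t_x.
have := mz 0; rewrite ez !multiple_x_t_x.
case: (eqVneq a 1) => [->|a1] //; lia.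
Qed.

Lemma index_x_t_x a b s : index 1 (x_t_x a b ++ s) = a.
Proof. by rewrite -catA index_cat mem_nseq andbF /= size_nseq addn0. Qed.

Lemma factor_x_t_x P w Q b : P ++ w ++ Q = x_t_x 1 b -> ata_factor w.
Proof.
move=> e.
have w01 : {subset w <= [:: 0; 1]}.
  by move=> y yw; apply: (@x_t_x_sub01 1 b); rewrite -e !mem_cat yw orbT.
have c1 := congr1 (count_mem 1) e; rewrite count_x_t_x !count_cat in c1.
have [w1|w1] := boolP (1 \in w); last by left; exists (size w); apply: nseq_of_sub01.
have w1c : count_mem 1 w = 1 by move: w1; rewrite -has_pred1 has_count; lia.
have P1 : 1 \notin P by apply/count_memPn; lia.
have [c [d ew]] := x_t_x_of_sub01 w01 w1c.
right; exists c, d; split=> //.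
have := congr1 (index 1) e.
by rewrite ew index_cat (negbTE P1) index_x_t_x -[x_t_x 1 b]cats0 index_x_t_x; lia.
Qed.

Lemma x_t_x_rcons a b : x_t_x a b ++ [:: 0] = x_t_x a b.+1.
Proof. by rewrite /x_t_x -catA; congr (_ ++ 1 :: _); rewrite -[b.+1]addn1 nseqD. Qed.

Lemma below_ata_plusP w : below ata_plus w <-> ata_factor w.
Proof.
split=> [[_ [p [s [[k [k0 ->]] l]]]]|[[j ->]|[a [b [a1 ->]]]]].
- by have [b e] := lam_ata_plus k0 l; apply: factor_x_t_x e.
- exists (x_t_x 1 j.+1), [:: 0; 1], [:: 0]; split; first by exists j.+1.
  by rewrite -x_t_x_rcons catA; apply: lam_refl.
- exists (x_t_x 1 b.+1), (nseq (1 - a) 0), [:: 0]; split; first by exists b.+1.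
  by rewrite -x_t_x_rcons catA; case: a a1 => [|[|]] // _; apply: lam_refl.
Qed.

Lemma below_ata_plus_nil : below ata_plus [::].
Proof. by apply/below_ata_plusP; left; exists 0. Qed.

Lemma not_below_ata_plus_2 : ~ below ata_plus [:: 2].
Proof. by move/below_ata_plusP=> [[[|[|j]]]|[[|[|a]] [[|b] []]]]. Qed.

Section XtxIdentity.
Variable S : word -> word -> Prop.
Hypothesis HS : fi_congruence S.

Lemma S_ctx P Q u v : S u v -> S (P ++ u ++ Q) (P ++ v ++ Q).
Proof. by move=> Suv; apply: (fic_mul HS (fic_refl HS P) (fic_mul HS Suv (fic_refl HS Q))). Qed.

Lemma S_cons x u v : S u v -> S (x :: u) (x :: v).
Proof. exact: (fic_mul HS (fic_refl HS [:: x])). Qed.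

Hypothesis xtx_xtxx : S [:: 0; 1; 0] [:: 0; 1; 0; 0].

Lemma S_square_later P Q R : S (P ++ 0 :: Q ++ 0 :: R) (P ++ 0 :: Q ++ 0 :: 0 :: R).
Proof.
have := S_ctx P R (fic_subst HS (fun y => if y == 1 then Q else [:: y]) xtx_xtxx).
by rewrite /= -!catA.
Qed.

Lemma S_pow_square P R n : S (P ++ nseq n.+2 0 ++ R) (P ++ [:: 0; 0] ++ R).
Proof.
elim: n => [|n IH]; first exact: (fic_refl HS).
by apply: (fic_trans HS) IH; move: (S_square_later P [::] (nseq n 0 ++ R)) => /(fic_sym HS).
Qed.

Lemma S_later_pow Q n : S (0 :: Q ++ nseq n.+1 0) (0 :: Q ++ [:: 0]).
Proof.
elim: n => [|n IH]; first exact: (fic_refl HS).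
by apply: (fic_trans HS) IH; move: (S_square_later [::] Q (nseq n 0)) => /(fic_sym HS).
Qed.

Hypothesis not_xtx_xxtx : ~ S [:: 0; 1; 0] [:: 0; 0; 1; 0].

Lemma not_S_x_xx : ~ S [:: 0] [:: 0; 0].
Proof. by move=> S_x_xx; apply/not_xtx_xxtx/(S_ctx [::] [:: 1; 0] S_x_xx). Qed.

Lemma not_S_x_pow n : ~ S [:: 0] (nseq n.+2 0).
Proof.
move=> S_x_pow; apply: not_S_x_xx; apply: (fic_trans HS S_x_pow).
by have := S_pow_square [::] [::] n; rewrite /= !cats0.
Qed.

Lemma not_S_nil_pow n : ~ S [::] (nseq n.+1 0).
Proof. by move/(S_cons 0); apply: not_S_x_pow. Qed.

Lemma S_capped_pow m n : S (nseq m 0) (nseq n 0) -> minn m 2 = minn n 2.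
Proof.
wlog le_mn : m n / m <= n.
  move=> sym Smn; have [le|/ltnW le] := leqP m n; first exact: sym.
  by rewrite (sym n m le (fic_sym HS Smn)).
case: m n le_mn => [|[|m]] [|[|n]] // _.
- by move/not_S_nil_pow.
- by move/not_S_nil_pow.
- by move/not_S_x_pow.
Qed.

Lemma S_capped_count z u v : S u v -> minn (count_mem z u) 2 = minn (count_mem z v) 2.
Proof.
move=> Suv; apply: S_capped_pow.
by have := fic_subst HS (fun y => if y == z then [:: 0] else [::]) Suv; rewrite !subst_count_mem.
Qed.

Lemma S_mem y u v : S u v -> (y \in u) = (y \in v).
Proof.
move/(S_capped_count y); rewrite -!has_pred1 !has_count.
by case: (count_mem y u) => [|[|?]]; case: (count_mem y v) => [|[|?]].
Qed.

Lemma not_S_x_t_x_1 b c d : 2 <= c -> ~ S (x_t_x 1 b) (x_t_x c d).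
Proof.
move=> c2 Sw.
have b_pos : 0 < b by move: (S_capped_count 0 Sw); rewrite !count_x_t_x; lia.
case: b b_pos Sw => [//|b] _; case: c c2 => [|[|c]] // _ Sw.
have S_xtx : S [:: 0; 1; 0] (x_t_x 2 d).
  have xtx_w : S [:: 0; 1; 0] (x_t_x 1 b.+1).
    by move: (S_later_pow [:: 1] b) => /(fic_sym HS).
  apply: (fic_trans HS xtx_w); apply: (fic_trans HS Sw).
  by move: (S_pow_square [::] (1 :: nseq d 0) c).
apply: not_xtx_xxtx; case: d {Sw} S_xtx => [|d] S_xtx.
- by apply: (fic_trans HS xtx_xtxx); move: (S_ctx [::] [:: 0] S_xtx).
- by apply: (fic_trans HS S_xtx); move: (S_later_pow [:: 0; 1] d).
Qed.

Lemma S_x_t_x_succ a b c d : S (x_t_x a b) (x_t_x c d) -> S (x_t_x a.+1 b) (x_t_x c.+1 d).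
Proof. exact: S_cons. Qed.

Lemma S_x_t_x_exp a b c d : a <= 1 -> S (x_t_x a b) (x_t_x c d) -> c = a.
Proof.
case: a => [|[|//]] _ Sw.
- case: c Sw => [//|c] /S_x_t_x_succ Sw.
  by case: (not_S_x_t_x_1 _ Sw).
- case: c Sw => [|[//|c]] Sw.
  + by case: (not_S_x_t_x_1 (leqnn 2) (fic_sym HS (S_x_t_x_succ Sw))).
  + by case: (not_S_x_t_x_1 _ Sw).
Qed.

Lemma ata_plus_lam_stable : below_lam_stable ata_plus S.
Proof.
move=> w w' /below_ata_plusP bw Sw; have cnt z := S_capped_count z Sw.
have w'01 : {subset w' <= [:: 0; 1]}.
  move=> y; rewrite -(S_mem y Sw).
  case: bw => [[j ->]|[a [b [_ ->]]]]; last exact: x_t_x_sub01.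
  by rewrite mem_nseq => /andP [_ /eqP ->].
case: bw => [[j ->]|[a [b [a1 ->]]]] in Sw cnt *.
- have w'1 : 1 \notin w' by rewrite -(S_mem 1 Sw) mem_nseq andbF.
  have [k ew'] : exists k, w' = nseq k 0 by exists (size w'); apply: nseq_of_sub01.
  subst w'.
  split; first by apply/below_ata_plusP; left; exists k.
  by apply: lam_pow; move: (cnt 0); rewrite !count_nseq /= !mul1n.
- have [c [d ew']] : exists c d, w' = x_t_x c d.
    by apply: x_t_x_of_sub01 => //; move: (cnt 1); rewrite count_x_t_x; lia.
  subst w'; have ca := S_x_t_x_exp a1 Sw; subst c.
  split; first by apply/below_ata_plusP; right; exists a, d.
  by apply: lam_x_t_x => //; move: (cnt 0); rewrite !count_x_t_x; lia.
Qed.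

End XtxIdentity.

Theorem lemma4p4 (S : word -> word -> Prop) (HS : fi_congruence S) :
  S [:: 0; 1; 0] [:: 0; 1; 0; 0] ->
  ~ Mvar_sub ata_plus S ->
  S [:: 0; 1; 0] [:: 0; 0; 1; 0].
Proof.
move=> xtx_xtxx not_sub; apply: NNPP => not_xtx_xxtx; apply: not_sub.
apply: (Mvar_sub_of_lam_stable HS below_ata_plus_nil not_below_ata_plus_2).
exact: ata_plus_lam_stable.
Qed.
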